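(* For a round $t\ge2$, there is a point $W\in\mathbb R^{(t-1)K}$ such that \[\Delta_{t-1}(W)\le 8\sqrt{K/\beta_t},\qquad W\in\mathcal C,\qquad \forall Z\in\mathcal C:\ \mathbb{E}_{x\sim h_{t-1}}\Bigl[\sum_a\frac{Z(x,a)}{W'(x,a)}\Bigr]\le\max\{4K,\beta_t\Delta_{t-1}(Z)^2\}.\] In particular, the value $\mathrm{OPT}_t$ of the RandomizedUCB optimization problem in round $t$ is bounded by $8\sqrt{K/\beta_t}\le110\sqrt{KC_{t-1}/(t-1)}$.
   Context: $A$ is a set of $K$ actions, $X$ a set of contexts, $\Pi$ a finite set of $N$ policies $\pi:X\to A$, $\delta\in(0,1)$. $h_{t-1}=((x_i,a_i,r_i,p_i))_{i=1}^{t-1}$ is a history with $r_i\in[0,1]$, $p_i\in(0,1]$. $C_t=2\log(Nt/\delta)$, $\mu_t=\min\{\frac1{2K},\sqrt{C_t/(2Kt)}\}$, $\beta_t=\frac{t-1}{180C_{t-1}}$. Vectors have coordinates indexed by $(x,a)\in\{x_1,\dots,x_{t-1}\}\times A$; policy $\pi$ is identified with $\pi(x,a)=\mathbb{I}(\pi(x)=a)$; $\mathcal C$ is the convex hull of policy vectors; for a distribution $P$ over $\Pi$, $W_P(x,a)=\sum_{\pi:\pi(x)=a}P(\pi)\in\mathcal C$. $W'(x,a)=(1-K\mu_t)W(x,a)+\mu_t$. $\mathbb{E}_{x\sim h_{t-1}}$ is the average over $x_1,\dots,x_{t-1}$. $\eta_{t-1}(W)=\frac1{t-1}\sum_i r_iW(x_i,a_i)/p_i$,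 $\Delta_{t-1}(W)=\max_{\pi}\eta_{t-1}(\pi)-\eta_{t-1}(W)$. The RandomizedUCB optimization problem in round $t$ is: minimize $\sum_\pi P(\pi)\Delta_{t-1}(\pi)$ over distributions $P$ on $\Pi$ subject to, for all distributions $Q$ over $\Pi$, $\mathbb{E}_{\pi\sim Q}\mathbb{E}_{x\sim h_{t-1}}[1/((1-K\mu_t)W_P(x,\pi(x))+\mu_t)]\le\max\{4K,(t-1)\Delta_{t-1}(W_Q)^2/(180C_{t-1})\}$; $\mathrm{OPT}_t$ is its optimal value. *)

From HB Require Import structures.
From mathcomp Require Import all_boot all_order all_algebra.
From mathcomp Require Import all_classical all_reals all_analysis.
Set Implicit Arguments. Unset Strict Implicit. Unset Printing Implicit Defensive.
Import Order.TTheory GRing.Theory Num.Theory.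
Local Open Scope classical_set_scope.
Local Open Scope ring_scope.

Section RUCB.
Variables (R : realType) (A : finType) (X : Type) (Pi : finType).
Variables (pol : Pi -> X -> A) (delta : R).

Definition nK : R := #|A|%:R.
Definition nN : R := #|Pi|%:R.

Definition Cc (s : nat) : R := 2 * ln (nN * s%:R / delta).
Definition mu (t : nat) : R :=
  Num.min (1 / (2 * nK)) (Num.sqrt (Cc t / (2 * nK * t%:R))).
Definition beta (t : nat) : R := (t.-1)%:R / (180 * Cc t.-1).

(* vectors indexed by (x,a); only the coordinates with x a context of the
   history matter *)
Definition vec := X -> A -> R.
Definition polvec (p : Pi) : vec := fun x a => (pol p x == a)%:R.
Definition is_dist (P : Pi -> R) := (forall p, 0 <= P p) /\ \sum_p P p = 1.
Definition WP (P : Pi -> R) : vec := fun x a => \sum_(p | pol p x == a) P p.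
Definition Wprime (t : nat) (W : vec) : vec :=
  fun x a => (1 - nK * mu t) * W x a + mu t.

(* history h = ((x_i, a_i, r_i, p_i))_{i < n}, here n = t - 1 *)
Variables (n : nat) (hx : 'I_n -> X) (ha : 'I_n -> A) (hr hp : 'I_n -> R).

Definition Ex (g : X -> R) : R := n%:R^-1 * \sum_i g (hx i).
Definition eta (W : vec) : R := n%:R^-1 * \sum_i hr i * W (hx i) (ha i) / hp i.
Definition Delta (W : vec) : R := sup (range (fun p => eta (polvec p))) - eta W.
Definition inC (W : vec) : Prop :=
  exists P, is_dist P /\ forall i a, W (hx i) a = WP P (hx i) a.

Definition rucb_feasible (t : nat) (P : Pi -> R) : Prop :=
  is_dist P /\
  forall Q, is_dist Q ->
    \sum_p Q p * Ex (fun x => ((1 - nK * mu t) * WP P x (pol p x) + mu t)^-1)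
    <= Num.max (4 * nK) ((t.-1)%:R * Delta (WP Q) ^+ 2 / (180 * Cc t.-1)).
Definition OPT (t : nat) : R :=
  inf [set \sum_p P p * Delta (polvec p) | P in rucb_feasible t].
End RUCB.

(** The point is [W_P] for an approximate minimiser [P] over distributions of the
    log-barrier potential
      [F(P) = E_x [- sum_a ln W'_P(x,a)] - lam * eta(W_P)],  [lam = beta_t r / 4],
    where [r = sqrt (K / beta_t)].  Moving [P] a step [s] towards any [Q] cannot
    lower [F] by more than the slack; expanding the logarithm to second order
    (every [W'] is at least [mu_t]) turns this into
      [(1 - K mu_t) (V(Q) - V(P)) <= K / 2 + lam (Delta(Q) - Delta(P))],
    with [V(Q) = E_x sum_a W_Q(x,a) / W'_P(x,a)].  For [Q] the best policy
    ([Delta(Q) = 0]) this gives [Delta(P) <= 6 r]; for general [Q] it gives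
    [V(Q) <= max(4K, beta_t Delta(Q)^2)], i.e. [P] is feasible for the
    RandomizedUCB problem, whence [OPT_t <= Delta(P)]. *)

From Pilot Require Import Defs.
From HB Require Import structures.
From mathcomp Require Import all_boot all_order all_algebra.
From mathcomp Require Import all_classical all_reals all_analysis.
From mathcomp Require Import ring lra.
Set Implicit Arguments. Unset Strict Implicit. Unset Printing Implicit Defensive.
Import Order.TTheory GRing.Theory Num.Theory.
Local Open Scope ring_scope.

Lemma ln_le_subr1 {R : realType} (x : R) : 0 < x -> ln x <= x - 1.
Proof. by move=> x0; have := expR_ge1Dx (ln x); rewrite lnK ?posrE //; lra. Qed.

Lemma ln_sub_lnD_le {R : realType} (a d m : R) : 0 < m <= a -> m <= a + d ->
  ln a - ln (a + d) <= - d / a + d ^+ 2 / m ^+ 2.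
Proof.
move=> /andP[m0 ma] mad.
have a0 : 0 < a by lra.
have ad0 : 0 < a + d by lra.
rewrite -ln_div ?posrE //.
apply: (le_trans (ln_le_subr1 (divr_gt0 a0 ad0))).
have -> : a / (a + d) - 1 = - d / a + d ^+ 2 / (a * (a + d)).
  by field; rewrite !gt_eqF.
rewrite lerD2l ler_wpM2l ?sqr_ge0 // lef_pV2 ?posrE ?exprn_gt0 ?mulr_gt0 //.
by rewrite expr2 ler_pM // ltW.
Qed.

(* The arithmetic of the two final bounds: [c] stands for [1 - K mu_t], [v0] and
   [v] for the variances at the minimiser and at a competitor, [d0] and [d] for
   their regrets, and [b * r / 4] for the barrier weight. *)
Lemma tradeoff_gap_le {R : realFieldType} (K b r c v0 v d0 : R) :
  K = b * r ^+ 2 -> 0 < b -> 0 < r -> 0 <= c -> 0 <= v -> c * v0 <= K ->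
  c * (v - v0) <= K / 2 + b * r / 4 * (0 - d0) -> d0 <= 6 * r.
Proof.
move=> -> b_gt0 r_gt0 c_ge0 v_ge0 cv0_le h.
have cv_ge0 : 0 <= c * v by rewrite mulr_ge0.
have : b * r * (d0 - 6 * r) <= 0 by nra.
by rewrite pmulr_rle0 ?mulr_gt0 // subr_le0.
Qed.

Lemma tradeoff_value_le {R : realFieldType} (K b r c v0 v d0 d : R) :
  K = b * r ^+ 2 -> 0 < b -> 0 < r -> 1 / 2 <= c -> 0 <= v -> 0 <= d -> 0 <= d0 ->
  c * v0 <= K -> c * (v - v0) <= K / 2 + b * r / 4 * (d - d0) ->
  v <= Num.max (4 * K) (b * d ^+ 2).
Proof.
move=> -> b_gt0 r_gt0 c_ge v_ge0 d_ge0 d0_ge0 cv0_le h.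
have br_gt0 : 0 < b * r by rewrite mulr_gt0.
have hv : v <= 3 * (b * r ^+ 2) + b * r / 2 * d.
  have : 0 <= (c - 1 / 2) * v by rewrite mulr_ge0 // subr_ge0.
  have : 0 <= b * r / 4 * d0 by rewrite mulr_ge0 // divr_ge0 // ltW.
  nra.
rewrite le_max; apply/orP.
have [small|large] := lerP (b * r / 2 * d) (b * r ^+ 2); [left; lra | right].
have d_gt : 2 * r < d.
  have : 0 < b * r / 2 * (d - 2 * r) by rewrite mulrBr; lra.
  by rewrite pmulr_rgt0 ?divr_gt0 // subr_gt0.
have : 0 <= b * (d - 2 * r) * (2 * d + 3 * r).
  by rewrite !mulr_ge0 ?subr_ge0 ?(ltW b_gt0) ?(ltW d_gt) //; lra.
nra.
Qed.

Section Weights.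
Variables (R : realType) (A : finType) (X : Type) (Pi : finType).
Variable pol : Pi -> X -> A.

Lemma WP_polvec (P : Pi -> R) x a : WP pol P x a = \sum_p P p * polvec R pol p x a.
Proof.
rewrite /WP /polvec big_mkcond /=; apply: eq_bigr => p _.
by case: eqP => _; rewrite ?mulr1 ?mulr0.
Qed.

Lemma sum_WP (P : Pi -> R) x : \sum_p P p = 1 -> \sum_a WP pol P x a = 1.
Proof. by move=> <-; rewrite /WP (partition_big (fun p => pol p x) predT). Qed.

Lemma WP_ge0 (P : Pi -> R) x a : is_dist P -> 0 <= WP pol P x a.
Proof. by case=> P_ge0 _; apply: sumr_ge0. Qed.

Lemma WP_itv (P : Pi -> R) x a : is_dist P -> 0 <= WP pol P x a <= 1.
Proof.
move=> dP; rewrite WP_ge0 //= -(sum_WP x dP.2) (bigD1 a) //= lerDl.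
by apply: sumr_ge0 => b _; apply: WP_ge0.
Qed.

Definition mix (s : R) (P Q : Pi -> R) : Pi -> R := fun p => (1 - s) * P p + s * Q p.

Lemma mix_dist s (P Q : Pi -> R) :
  0 <= s <= 1 -> is_dist P -> is_dist Q -> is_dist (mix s P Q).
Proof.
move=> /andP[s_ge0 s_le1] [P_ge0 P1] [Q_ge0 Q1]; split=> [p|].
  by rewrite addr_ge0 ?mulr_ge0 ?subr_ge0.
by rewrite big_split /= -!mulr_sumr P1 Q1; ring.
Qed.

Lemma WP_mix s (P Q : Pi -> R) x a :
  WP pol (mix s P Q) x a = (1 - s) * WP pol P x a + s * WP pol Q x a.
Proof. by rewrite /WP big_split /= -!mulr_sumr. Qed.

Definition dirac (p0 : Pi) : Pi -> R := fun p => (p == p0)%:R.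

Lemma dirac_dist p0 : is_dist (dirac p0).
Proof.
split=> [p|]; first exact: ler0n.
by rewrite (bigD1 p0) //= /dirac eqxx big1 ?addr0 // => p /negbTE ->.
Qed.

Lemma WP_dirac p0 x a : WP pol (dirac p0) x a = polvec R pol p0 x a.
Proof.
rewrite WP_polvec (bigD1 p0) //= /dirac eqxx mul1r big1 ?addr0 // => p /negbTE ->.
by rewrite mul0r.
Qed.

End Weights.

Lemma nK_ge1 (R : realType) (A : finType) : (0 < #|A|)%N -> 1 <= nK R A.
Proof. by rewrite /nK ler1n. Qed.

Lemma nK_gt0 (R : realType) (A : finType) : (0 < #|A|)%N -> 0 < nK R A.
Proof. by rewrite /nK ltr0n. Qed.

Section RandomizedUCB.
Variables (R : realType) (A : finType) (X : Type) (Pi : finType).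
Variables (pol : Pi -> X -> A) (n : nat) (hx : 'I_n -> X) (ha : 'I_n -> A).
Variables (hr hp : 'I_n -> R).

Local Notation E := (Ex hx).
Local Notation eta := (Defs.eta hx ha hr hp).
Local Notation Delta := (Delta pol hx ha hr hp).

Lemma Ex_ext (g g' : X -> R) : (forall i, g (hx i) = g' (hx i)) -> E g = E g'.
Proof. by move=> h; rewrite /Ex; congr (_ * _); apply: eq_bigr => i _; rewrite h. Qed.

Lemma ler_Ex (g g' : X -> R) : (forall i, g (hx i) <= g' (hx i)) -> E g <= E g'.
Proof. by move=> h; rewrite /Ex ler_wpM2l ?invr_ge0 // ler_sum. Qed.

Lemma Ex_cst (c : R) : (0 < n)%N -> E (fun _ => c) = c.
Proof.
move=> n_gt0; rewrite /Ex sumr_const card_ord -[c *+ _]mulr_natl mulKf //.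
by rewrite pnatr_eq0 -lt0n.
Qed.

Lemma ExD (g g' : X -> R) : E (fun x => g x + g' x) = E g + E g'.
Proof. by rewrite /Ex big_split mulrDr. Qed.

Lemma ExB (g g' : X -> R) : E (fun x => g x - g' x) = E g - E g'.
Proof. by rewrite /Ex sumrB mulrBr. Qed.

Lemma ExZ (c : R) (g : X -> R) : E (fun x => c * g x) = c * E g.
Proof. by rewrite /Ex -mulr_sumr mulrCA. Qed.

Lemma Ex_sum (f : Pi -> X -> R) : E (fun x => \sum_p f p x) = \sum_p E (f p).
Proof. by rewrite /Ex -mulr_sumr exchange_big. Qed.

Lemma eta_ext (W W' : vec R A X) :
  (forall i a, W (hx i) a = W' (hx i) a) -> eta W = eta W'.
Proof. by move=> h; rewrite /Defs.eta; congr (_ * _); apply: eq_bigr => i _; rewrite h. Qed.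

Lemma eta_WP (P : Pi -> R) : eta (WP pol P) = \sum_p P p * eta (polvec R pol p).
Proof.
rewrite /Defs.eta; under [RHS]eq_bigr => p _ do rewrite mulrCA mulr_sumr.
rewrite -mulr_sumr exchange_big /=; congr (_ * _); apply: eq_bigr => i _.
rewrite WP_polvec mulr_sumr mulr_suml; apply: eq_bigr => p _; ring.
Qed.

Lemma eta_WP_mix s (P Q : Pi -> R) :
  eta (WP pol (mix s P Q)) = (1 - s) * eta (WP pol P) + s * eta (WP pol Q).
Proof.
rewrite !eta_WP !mulr_sumr -big_split; apply: eq_bigr => p _ /=; rewrite /mix; ring.
Qed.

Lemma Delta_ext (W W' : vec R A X) :
  (forall i a, W (hx i) a = W' (hx i) a) -> Delta W = Delta W'.
Proof. by move=> h; rewrite /Delta (eta_ext h). Qed.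

Hypothesis Pi_gt0 : (0 < #|Pi|)%N.

Local Notation eta_max := (sup (range (fun p => eta (polvec R pol p)))).

Lemma eta_argmax : exists ps, forall p, eta (polvec R pol p) <= eta (polvec R pol ps).
Proof.
have [p0 _] := card_gt0P Pi_gt0.
exists [arg max_(p > p0) eta (polvec R pol p)]%O.
case: (@arg_maxP _ _ _ p0 xpredT (fun p => eta (polvec R pol p))) => // ps _ ps_max p.
exact: ps_max.
Qed.

Lemma eta_polvec_le_max p : eta (polvec R pol p) <= eta_max.
Proof.
have [ps ps_max] := eta_argmax.
by apply: ub_le_sup; [exists (eta (polvec R pol ps)) => _ [q _ <-] | exists p].
Qed.

Lemma eta_max_attained : exists ps, eta (polvec R pol ps) = eta_max.
Proof.
have [ps ps_max] := eta_argmax; exists ps; apply/eqP.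
rewrite eq_le eta_polvec_le_max ge_sup //; first by exists (eta (polvec R pol ps)), ps.
by move=> _ [q _ <-].
Qed.

Lemma Delta_polvec_ge0 p : 0 <= Delta (polvec R pol p).
Proof. by rewrite subr_ge0 eta_polvec_le_max. Qed.

Lemma Delta_WP (P : Pi -> R) :
  is_dist P -> Delta (WP pol P) = \sum_p P p * Delta (polvec R pol p).
Proof.
case=> _ P1; rewrite /Delta eta_WP.
under [RHS]eq_bigr => p _ do rewrite mulrBr.
by rewrite sumrB -mulr_suml P1 mul1r.
Qed.

Lemma Delta_WP_ge0 (P : Pi -> R) : is_dist P -> 0 <= Delta (WP pol P).
Proof.
move=> dP; rewrite Delta_WP //; apply: sumr_ge0 => p _.
by rewrite mulr_ge0 ?Delta_polvec_ge0 ?dP.1.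
Qed.

Variables (delta : R) (t : nat).
Hypotheses (A_gt0 : (0 < #|A|)%N) (n_gt0 : (0 < n)%N).
Hypotheses (delta_itv : 0 < delta < 1) (t_ge2 : (2 <= t)%N).

Local Notation K := (nK R A).
Local Notation mu_t := (mu A Pi delta t).
Local Notation beta_t := (beta Pi delta t).
Local Notation Wp := (Wprime Pi delta t).
Local Notation scale := (1 - K * mu_t).

Lemma pred_t_gt0 : (0 < t.-1)%N.
Proof. by case: t t_ge2 => [|[|]]. Qed.

Lemma Cc_gt0 s : (0 < s)%N -> 0 < Cc Pi delta s.
Proof.
move=> s_gt0; have [d_gt0 d_lt1] := andP delta_itv.
have N_ge1 : 1 <= nN R Pi by rewrite /nN ler1n.
have s_ge1 : 1 <= s%:R :> R by rewrite ler1n.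
rewrite /Cc mulr_gt0 // ln_gt0 // ltr_pdivlMr // mul1r.
by apply: (lt_le_trans d_lt1); nra.
Qed.

Lemma mu_gt0 : 0 < mu_t.
Proof.
have K_gt0 := nK_gt0 R A_gt0.
rewrite lt_min divr_gt0 ?mulr_gt0 //= sqrtr_gt0 divr_gt0 ?Cc_gt0 ?mulr_gt0 //.
  by apply: leq_trans t_ge2.
by rewrite ltr0n; apply: leq_trans t_ge2.
Qed.

Lemma nK_mu_le_half : K * mu_t <= 1 / 2.
Proof.
have K_gt0 := nK_gt0 R A_gt0.
have : mu_t <= 1 / (2 * K) by rewrite ge_min lexx.
by rewrite ler_pdivlMr ?mulr_gt0 // => ?; nra.
Qed.

Lemma scale_itv : 1 / 2 <= scale <= 1.
Proof.
have := nK_mu_le_half; have := mu_gt0; have := nK_ge1 R A_gt0.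
by move=> *; apply/andP; split; nra.
Qed.

Lemma beta_gt0 : 0 < beta_t.
Proof. by rewrite divr_gt0 ?ltr0n ?pred_t_gt0 // mulr_gt0 // Cc_gt0 // pred_t_gt0. Qed.

Lemma scale_mu_itv (w : R) : 0 <= w <= 1 -> mu_t <= scale * w + mu_t <= 1.
Proof.
move=> /andP[w_ge0 w_le1]; have [sc_ge sc_le] := andP scale_itv.
have := mu_gt0; have := nK_ge1 R A_gt0 => K_ge1 mu_gt0'.
by apply/andP; split; nra.
Qed.

Lemma Wprime_itv (W : vec R A X) x a : 0 <= W x a <= 1 -> mu_t <= Wp W x a <= 1.
Proof. exact: scale_mu_itv. Qed.

Definition variance (W Z : vec R A X) : R := E (fun x => \sum_a Z x a / Wp W x a).

Lemma variance_ext (W Z Z' : vec R A X) :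
  (forall i a, Z (hx i) a = Z' (hx i) a) -> variance W Z = variance W Z'.
Proof. by move=> Z_eq; apply: Ex_ext => i; apply: eq_bigr => a _; rewrite Z_eq. Qed.

Definition barrier (lam : R) (P : Pi -> R) : R :=
  E (fun x => - \sum_a ln (Wp (WP pol P) x a)) - lam * eta (WP pol P).

Lemma barrier_lbound lam (P : Pi -> R) :
  0 <= lam -> is_dist P -> - lam * eta_max <= barrier lam P.
Proof.
move=> lam_ge0 dP.
have log_ge0 : 0 <= E (fun x => - \sum_a ln (Wp (WP pol P) x a)).
  rewrite -[leLHS](Ex_cst 0 n_gt0); apply: ler_Ex => i /=; rewrite oppr_ge0.
  apply: sumr_le0 => a _; apply: ln_le0.
  by case/andP: (Wprime_itv (WP_itv pol (hx i) a dP)).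
have := Delta_WP_ge0 dP; rewrite subr_ge0 /barrier => eta_le; nra.
Qed.

Lemma barrier_approx_min lam eps : 0 <= lam -> 0 < eps ->
  exists2 P0, is_dist P0 & forall Q, is_dist Q -> barrier lam P0 < barrier lam Q + eps.
Proof.
move=> lam_ge0 eps_gt0.
set S := [set barrier lam P | P in @is_dist R Pi]%classic.
have [p0 _] := card_gt0P Pi_gt0.
have S_inf : has_inf S.
  split; first by exists (barrier lam (dirac R p0)), (dirac R p0); first exact: dirac_dist.
  by exists (- lam * eta_max) => _ [P dP <-]; exact: barrier_lbound.
have [_ [P0 dP0 <-] P0_lt] := inf_adherent eps_gt0 S_inf.
exists P0 => // Q dQ.
have : inf S <= barrier lam Q by apply: (ge_inf S_inf.2); exists Q.
lra.
Qed.

Lemma ln_scale_mix_le (w z s : R) : 0 <= w <= 1 -> 0 <= z <= 1 -> 0 < s <= 1 ->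
  ln (scale * w + mu_t) - ln (scale * ((1 - s) * w + s * z) + mu_t)
  <= - (s * scale) * ((z - w) / (scale * w + mu_t)) + s ^+ 2 / mu_t ^+ 2.
Proof.
move=> w_itv z_itv /andP[s_gt0 s_le1].
have [w_ge0 w_le1] := andP w_itv; have [z_ge0 z_le1] := andP z_itv.
have [sc_ge sc_le] := andP scale_itv; have mu_gt0' := mu_gt0.
have mix_itv : 0 <= (1 - s) * w + s * z <= 1 by apply/andP; split; nra.
have mix_eq : scale * ((1 - s) * w + s * z) + mu_t
    = scale * w + mu_t + s * scale * (z - w) by ring.
have [mu_le_a _] := andP (scale_mu_itv w_itv).
have [mu_le_ad _] := andP (scale_mu_itv mix_itv).
rewrite mix_eq in mu_le_ad *.
apply: le_trans (ln_sub_lnD_le (m := mu_t) _ mu_le_ad) _; first by rewrite mu_gt0'.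
have -> : - (s * scale * (z - w)) / (scale * w + mu_t)
    = - (s * scale) * ((z - w) / (scale * w + mu_t)) by rewrite !mulNr !mulrA.
rewrite lerD2l ler_wpM2r ?invr_ge0 ?sqr_ge0 //.
have : (scale * (z - w)) ^+ 2 <= 1.
  have d_ge : -1 <= scale * (z - w) by nra.
  have d_le : scale * (z - w) <= 1 by nra.
  nra.
by move=> d2_le1; rewrite -mulrA exprMn ler_piMr ?sqr_ge0.
Qed.

Lemma log_barrier_mix_le (P Q : Pi -> R) s :
  is_dist P -> is_dist Q -> 0 < s <= 1 ->
  E (fun x => - \sum_a ln (Wp (WP pol (mix s P Q)) x a))
    - E (fun x => - \sum_a ln (Wp (WP pol P) x a))
  <= - (s * scale) * (variance (WP pol P) (WP pol Q) - variance (WP pol P) (WP pol P))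
     + K * (s ^+ 2 / mu_t ^+ 2).
Proof.
move=> dP dQ s_itv.
have -> : - (s * scale) * (variance (WP pol P) (WP pol Q) - variance (WP pol P) (WP pol P))
    + K * (s ^+ 2 / mu_t ^+ 2)
  = E (fun x => \sum_a (- (s * scale) * ((WP pol Q x a - WP pol P x a) / Wp (WP pol P) x a)
                      + s ^+ 2 / mu_t ^+ 2)).
  rewrite /variance -ExB -ExZ -(Ex_cst (K * (s ^+ 2 / mu_t ^+ 2)) n_gt0) -ExD; apply: Ex_ext => i.
  rewrite big_split /= sumr_const -mulr_sumr -sumrB; congr (_ * _ + _).
    by apply: eq_bigr => a _; rewrite mulrBl.
  by rewrite /nK mulr_natl.
rewrite -ExB; apply: ler_Ex => i /=; rewrite opprK addrC -sumrB; apply: ler_sum => a _.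
by rewrite /Wprime WP_mix ln_scale_mix_le ?WP_itv.
Qed.

Lemma barrier_mix_le lam (P Q : Pi -> R) s :
  is_dist P -> is_dist Q -> 0 < s <= 1 ->
  barrier lam (mix s P Q) - barrier lam P
  <= - (s * scale) * (variance (WP pol P) (WP pol Q) - variance (WP pol P) (WP pol P))
     + K * (s ^+ 2 / mu_t ^+ 2) + lam * s * (Delta (WP pol Q) - Delta (WP pol P)).
Proof.
move=> dP dQ s_itv; have := log_barrier_mix_le dP dQ s_itv.
rewrite /barrier /Defs.Delta eta_WP_mix.
set L1 := E _; set L0 := E _; set eP := eta _; set eQ := eta _; set M := sup _.
have -> : L1 - lam * ((1 - s) * eP + s * eQ) - (L0 - lam * eP)
    = L1 - L0 + lam * s * (M - eQ - (M - eP)) by ring.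
by rewrite lerD2r.
Qed.

Lemma variance_first_order lam eps (P0 : Pi -> R) : is_dist P0 ->
  (forall Q, is_dist Q -> barrier lam P0 < barrier lam Q + eps) ->
  forall Q s, is_dist Q -> 0 < s <= 1 ->
  s * scale * (variance (WP pol P0) (WP pol Q) - variance (WP pol P0) (WP pol P0))
  <= eps + K * (s ^+ 2 / mu_t ^+ 2) + lam * s * (Delta (WP pol Q) - Delta (WP pol P0)).
Proof.
move=> dP0 P0_min Q s dQ s_itv.
have s_itv' : 0 <= s <= 1 by case/andP: s_itv => s_gt0 ->; rewrite ltW.
have := P0_min _ (mix_dist s_itv' dP0 dQ); have := barrier_mix_le lam dP0 dQ s_itv.
lra.
Qed.

Lemma variance_ge0 (P0 Q : Pi -> R) :
  is_dist P0 -> is_dist Q -> 0 <= variance (WP pol P0) (WP pol Q).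
Proof.
move=> dP0 dQ; rewrite -[leLHS](Ex_cst 0 n_gt0); apply: ler_Ex => i /=.
apply: sumr_ge0 => a _; rewrite divr_ge0 ?WP_ge0 //.
have [mu_le _] := andP (Wprime_itv (WP_itv pol (hx i) a dP0)).
exact: le_trans (ltW mu_gt0) mu_le.
Qed.

Lemma scale_variance_self_le (P0 : Pi -> R) :
  is_dist P0 -> scale * variance (WP pol P0) (WP pol P0) <= K.
Proof.
move=> dP0; rewrite -ExZ -[leRHS](Ex_cst K n_gt0); apply: ler_Ex => i /=.
rewrite mulr_sumr; apply: le_trans (_ : _ <= \sum_(a : A) 1) _; last by rewrite sumr_const.
apply: ler_sum => a _.
have [w_ge0 w_le1] := andP (WP_itv pol (hx i) a dP0).
have [sc_ge sc_le] := andP scale_itv; have mu_gt0' := mu_gt0.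
by rewrite /Wprime mulrA ler_pdivrMr; nra.
Qed.

Local Notation r := (Num.sqrt (K / beta_t)).

Lemma r_gt0 : 0 < r.
Proof. by rewrite sqrtr_gt0 divr_gt0 ?nK_gt0 ?beta_gt0. Qed.

Lemma nK_beta_r : K = beta_t * r ^+ 2.
Proof.
have K_gt0 := nK_gt0 R A_gt0; have b_gt0 := beta_gt0.
rewrite sqr_sqrtr; first by rewrite mulrC divfK // gt_eqF.
by rewrite divr_ge0 // ltW.
Qed.

Lemma exists_dist_regret_variance_le : exists2 P0, is_dist P0 &
  Delta (WP pol P0) <= 6 * r /\
  forall Q, is_dist Q ->
    variance (WP pol P0) (WP pol Q) <= Num.max (4 * K) (beta_t * Delta (WP pol Q) ^+ 2).
Proof.
have K_gt0 := nK_gt0 R A_gt0; have mu_gt0' := mu_gt0.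
have b_gt0 := beta_gt0; have r_gt0' := r_gt0.
(* The slack [eps] and the step [s] are tuned so that [eps + K s^2 / mu_t^2 = s K / 2]. *)
set lam := beta_t * r / 4; set eps := K * mu_t ^+ 2 / 16; set s := mu_t ^+ 2 / 4.
have lam_ge0 : 0 <= lam by rewrite divr_ge0 // mulr_ge0 // ltW.
have eps_gt0 : 0 < eps by rewrite divr_gt0 ?mulr_gt0 ?exprn_gt0.
have s_itv : 0 < s <= 1.
  have := nK_mu_le_half; have := nK_ge1 R A_gt0 => K_ge1 Kmu_le.
  by rewrite divr_gt0 ?exprn_gt0 //= ler_pdivrMr //; nra.
have [P0 dP0 P0_min] := barrier_approx_min lam_ge0 eps_gt0.
have step Q : is_dist Q -> scale * (variance (WP pol P0) (WP pol Q)
    - variance (WP pol P0) (WP pol P0)) <= K / 2 + lam * (Delta (WP pol Q) - Delta (WP pol P0)).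
  move=> dQ; have := variance_first_order dP0 P0_min dQ s_itv.
  have -> : eps + K * (s ^+ 2 / mu_t ^+ 2) + lam * s * (Delta (WP pol Q) - Delta (WP pol P0))
      = s * (K / 2 + lam * (Delta (WP pol Q) - Delta (WP pol P0))).
    by rewrite /eps /s; field; rewrite gt_eqF.
  by rewrite -mulrA ler_pM2l //; case/andP: s_itv.
have [sc_ge _] := andP scale_itv.
have sc_ge0 : 0 <= scale by apply: le_trans sc_ge; rewrite divr_ge0.
exists P0 => //; split => [|Q dQ].
  have [ps ps_max] := eta_max_attained.
  have Delta_ps : Delta (WP pol (dirac R ps)) = 0.
    by rewrite (Delta_ext (fun i => WP_dirac R pol ps (hx i))) /Defs.Delta ps_max subrr.
  have := step _ (dirac_dist R ps); rewrite Delta_ps.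
  apply: tradeoff_gap_le nK_beta_r b_gt0 r_gt0' sc_ge0 _ _.
    exact: variance_ge0 (dirac_dist R ps).
  exact: scale_variance_self_le.
apply: tradeoff_value_le nK_beta_r b_gt0 r_gt0' sc_ge _ _ _ _ (step _ dQ).
- exact: variance_ge0.
- exact: Delta_WP_ge0.
- exact: Delta_WP_ge0.
- exact: scale_variance_self_le.
Qed.

Lemma variance_WP (P0 Q : Pi -> R) :
  \sum_p Q p * E (fun x => (scale * WP pol P0 x (pol p x) + mu_t)^-1)
  = variance (WP pol P0) (WP pol Q).
Proof.
under eq_bigr => p _ do rewrite -ExZ.
rewrite -Ex_sum; apply: Ex_ext => i.
rewrite (partition_big (fun p => pol p (hx i)) predT) //=.
by apply: eq_bigr => a _; rewrite /WP mulr_suml; apply: eq_bigr => p /eqP <-.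
Qed.

Lemma rucb_feasible_WP (P0 : Pi -> R) : is_dist P0 ->
  (forall Q, is_dist Q ->
     variance (WP pol P0) (WP pol Q) <= Num.max (4 * K) (beta_t * Delta (WP pol Q) ^+ 2)) ->
  rucb_feasible pol delta hx ha hr hp t P0.
Proof.
move=> dP0 P0_var; split => // Q dQ.
by rewrite variance_WP mulrAC; exact: P0_var.
Qed.

Lemma OPT_le_Delta (P0 : Pi -> R) :
  rucb_feasible pol delta hx ha hr hp t P0 -> OPT pol delta hx ha hr hp t <= Delta (WP pol P0).
Proof.
move=> P0_feas; have dP0 := P0_feas.1.
have lb : has_lbound [set \sum_p P p * Delta (polvec R pol p)
                      | P in rucb_feasible pol delta hx ha hr hp t]%classic.
  exists 0 => _ [P [[P_ge0 _] _] <-]; apply: sumr_ge0 => p _.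
  by rewrite mulr_ge0 ?Delta_polvec_ge0.
by rewrite Delta_WP //; apply: (ge_inf lb); exists P0.
Qed.

Lemma sqrt_nK_beta_le : 8 * r <= 110 * Num.sqrt (K * Cc Pi delta t.-1 / (t.-1)%:R).
Proof.
have C_gt0 : 0 < Cc Pi delta t.-1 by rewrite Cc_gt0 ?pred_t_gt0.
have tn_gt0 : 0 < (t.-1)%:R :> R by rewrite ltr0n pred_t_gt0.
have -> : K / beta_t = 180 * (K * Cc Pi delta t.-1 / (t.-1)%:R).
  by rewrite /beta; field; rewrite !gt_eqF.
rewrite sqrtrM // mulrA ler_wpM2r ?sqrtr_ge0 //.
have s180_ge0 : 0 <= Num.sqrt (180 : R) := sqrtr_ge0 _.
have s180_sq : Num.sqrt (180 : R) ^+ 2 = 180 by rewrite sqr_sqrtr.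
nra.
Qed.

Lemma exists_low_regret_point : exists W : vec R A X,
  Delta W <= 8 * r /\ inC pol hx W /\
  forall Z, inC pol hx Z -> variance W Z <= Num.max (4 * K) (beta_t * Delta Z ^+ 2).
Proof.
have [P0 dP0 [P0_gap P0_var]] := exists_dist_regret_variance_le.
have := r_gt0; exists (WP pol P0); split; first lra.
split=> [|Z [Q [dQ Z_eq]]]; first by exists P0.
by rewrite (Delta_ext Z_eq) (variance_ext _ Z_eq); apply: P0_var.
Qed.

Lemma OPT_le_sqrt : OPT pol delta hx ha hr hp t <= 8 * r.
Proof.
have [P0 dP0 [P0_gap P0_var]] := exists_dist_regret_variance_le.
have := r_gt0; have := OPT_le_Delta (rucb_feasible_WP dP0 P0_var); lra.
Qed.

End RandomizedUCB.

Theorem lemma15 (R : realType) (A : finType) (X : Type) (Pi : finType)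
  (pol : Pi -> X -> A) (delta : R) (t : nat)
  (hx : 'I_t.-1 -> X) (ha : 'I_t.-1 -> A) (hr hp : 'I_t.-1 -> R) :
  (0 < #|A|)%N -> (0 < #|Pi|)%N -> injective pol ->
  0 < delta < 1 -> (2 <= t)%N ->
  (forall i, 0 <= hr i <= 1) -> (forall i, 0 < hp i <= 1) ->
  (exists W : vec R A X,
     Delta pol hx ha hr hp W <= 8 * Num.sqrt (nK R A / beta Pi delta t)
     /\ inC pol hx W
     /\ forall Z : vec R A X, inC pol hx Z ->
          Ex hx (fun x => \sum_a Z x a / Wprime Pi delta t W x a)
          <= Num.max (4 * nK R A)
                     (beta Pi delta t * Delta pol hx ha hr hp Z ^+ 2))
  /\ OPT pol delta hx ha hr hp t <= 8 * Num.sqrt (nK R A / beta Pi delta t)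
  /\ 8 * Num.sqrt (nK R A / beta Pi delta t)
     <= 110 * Num.sqrt (nK R A * Cc Pi delta t.-1 / (t.-1)%:R).
Proof.
move=> A_gt0 Pi_gt0 _ delta_itv t_ge2 _ _.
have n_gt0 : (0 < t.-1)%N by rewrite -subn1 subn_gt0.
split; last split.
- exact: exists_low_regret_point.
- exact: OPT_le_sqrt.
- exact: sqrt_nK_beta_le.
Qed.
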